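(* Let $(R,\mathfrak{m})$ be a Noetherian local ring and let $I$ be an ideal of $R$. Let $N>\mathrm{AR}(\mathfrak{m},I\subseteq R)$. If $J$ is an ideal of $R$ such that $I+\mathfrak{m}^N=J+\mathfrak{m}^N$, then $\mu(I)\le\mu(J)$.
   Context: $\mu(-)$ denotes the minimal number of generators. $\mathrm{AR}(\mathfrak{m},I\subseteq R)$ is the least integer $s$ with $\mathfrak{m}^n\cap I=\mathfrak{m}^{n-s}(\mathfrak{m}^s\cap I)$ for all $n\ge s$. *)

From mathcomp Require Import all_boot all_algebra.
From Stdlib Require Import ClassicalEpsilon.
Set Implicit Arguments. Unset Strict Implicit. Unset Printing Implicit Defensive.
Import GRing.Theory.
Local Open Scope ring_scope.

Section Ideals.
Variable R : comNzRingType.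

Definition subI (I J : R -> Prop) := forall x, I x -> J x.
Definition eqI (I J : R -> Prop) := forall x, I x <-> J x.

Definition is_ideal (I : R -> Prop) :=
  [/\ I 0, (forall x y, I x -> I y -> I (x + y)) & (forall r x, I x -> I (r * x))].

Definition ideal_gen (s : seq R) : R -> Prop :=
  fun x => exists c : 'I_(size s) -> R, x = \sum_(i < size s) c i * s`_i.

Definition idealD (I J : R -> Prop) : R -> Prop :=
  fun x => exists a b, [/\ I a, J b & x = a + b].
Definition idealI (I J : R -> Prop) : R -> Prop := fun x => I x /\ J x.
Definition idealM (I J : R -> Prop) : R -> Prop :=
  fun x => exists n (a b : 'I_n -> R),
    (forall i, I (a i) /\ J (b i)) /\ x = \sum_(i < n) a i * b i.
Definition idealX (I : R -> Prop) (n : nat) : R -> Prop :=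
  iter n (idealM I) (fun _ => True).

Definition ngen (I : R -> Prop) (n : nat) :=
  exists s : seq R, size s = n /\ eqI I (ideal_gen s).

Definition mu (I : R -> Prop) : nat :=
  epsilon (inhabits 0%N) (fun n => ngen I n /\ forall k, ngen I k -> (n <= k)%N).

Definition noetherian := forall I, is_ideal I -> exists n, ngen I n.

Definition maximal_ideal (M : R -> Prop) :=
  [/\ is_ideal M, ~ M 1 &
      forall J, is_ideal J -> subI M J -> eqI J M \/ J 1].

Definition local_ring (m : R -> Prop) :=
  maximal_ideal m /\ forall M, maximal_ideal M -> eqI M m.

Definition AR_prop (m I : R -> Prop) (s : nat) :=
  forall n, (s <= n)%N ->
    eqI (idealI (idealX m n) I) (idealM (idealX m (n - s)) (idealI (idealX m s) I)).

Definition is_AR (m I : R -> Prop) (s : nat) :=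
  AR_prop m I s /\ forall t, AR_prop m I t -> (s <= t)%N.

End Ideals.

(* Lift generators g_i of J to elements f_i of I with g_i - f_i in m^N.  Every
   x in I then differs from the matching combination of the f_i by an element
   of m^N \cap I, and m^N \cap I = m^(N-s) (m^s \cap I) lies in m I because
   N > s = AR(m, I).  So I = (f) + m I, and Nakayama's lemma gives I = (f). *)
From mathcomp Require Import all_boot all_algebra.
From mathcomp Require Import ring.
From Stdlib Require Import Classical ClassicalEpsilon.
Set Implicit Arguments. Unset Strict Implicit. Unset Printing Implicit Defensive.
Import GRing.Theory.
Local Open Scope ring_scope.

Lemma seq_lift (T U : Type) (x0 : T) (y0 : U) (P : T -> U -> Prop) (g : seq T) :
  (forall i, (i < size g)%N -> exists y, P (nth x0 g i) y) ->
  exists f : seq U, size f = size g /\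
    forall i, (i < size g)%N -> P (nth x0 g i) (nth y0 f i).
Proof.
elim: g => [|a g IH] lift; first by exists [::].
have [y Pay] := lift 0%N isT.
have [f [size_f Pgf]] := IH (fun i => lift i.+1).
by exists (y :: f); split=> [|[|i]] /=; rewrite ?size_f //; apply: Pgf.
Qed.

Section Ideals.
Variable R : comNzRingType.
Implicit Types (A B K I J M P Q : R -> Prop) (s : seq R).

Section Closure.
Variables (K : R -> Prop) (idK : is_ideal K).

Lemma ideal0 : K 0.
Proof. by case: idK. Qed.

Lemma ideal_add x y : K x -> K y -> K (x + y).
Proof. by case: idK => _ Kadd _; apply: Kadd. Qed.

Lemma ideal_mull r x : K x -> K (r * x).
Proof. by case: idK => _ _ Kmul; apply: Kmul. Qed.

Lemma ideal_mulr r x : K x -> K (x * r).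
Proof. by rewrite mulrC; apply: ideal_mull. Qed.

Lemma ideal_sub x y : K x -> K y -> K (x - y).
Proof. by move=> Kx Ky; apply: ideal_add Kx _; rewrite -mulN1r; apply: ideal_mull. Qed.

Lemma ideal_sum n (F : 'I_n -> R) : (forall i, K (F i)) -> K (\sum_(i < n) F i).
Proof. by move=> KF; apply: big_ind => //; [exact: ideal0 | exact: ideal_add]. Qed.

End Closure.

Lemma ideal_full : is_ideal (fun _ : R => True).
Proof. by []. Qed.

Lemma ideal_gen_ideal s : is_ideal (ideal_gen s).
Proof.
split.
- by exists (fun _ => 0); rewrite big1 // => i _; rewrite mul0r.
- move=> _ _ [c ->] [d ->]; exists (fun i => c i + d i).
  by rewrite -big_split; apply: eq_bigr => i _; rewrite mulrDl.
- move=> r _ [c ->]; exists (fun i => r * c i).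
  by rewrite mulr_sumr; apply: eq_bigr => i _; rewrite mulrA.
Qed.

Lemma ideal_gen_mem s x : x \in s -> ideal_gen s x.
Proof.
move=> /(nthP 0) [i lt_i <-]; exists (fun j => if j == Ordinal lt_i then 1 else 0).
rewrite (bigD1 (Ordinal lt_i)) //= eqxx mul1r big1 ?addr0 // => j /negbTE ->.
by rewrite mul0r.
Qed.

Lemma ideal_gen_sub K s : is_ideal K -> (forall x, x \in s -> K x) ->
  subI (ideal_gen s) K.
Proof.
move=> idK sK _ [c ->]; apply: (ideal_sum idK) => i.
by apply: (ideal_mull idK); apply/sK/mem_nth.
Qed.

Lemma idealD_ideal A B : is_ideal A -> is_ideal B -> is_ideal (idealD A B).
Proof.
move=> idA idB; split.
- by exists 0, 0; split; rewrite ?addr0 //; apply: ideal0.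
- move=> _ _ [a [b [Aa Bb ->]]] [a' [b' [Aa' Bb' ->]]].
  exists (a + a'), (b + b'); split; [exact: ideal_add | exact: ideal_add | ring].
- move=> r _ [a [b [Aa Bb ->]]]; exists (r * a), (r * b).
  by split; [exact: ideal_mull | exact: ideal_mull | rewrite mulrDr].
Qed.

Lemma idealD_sub A A' B B' : subI A A' -> subI B B' -> subI (idealD A B) (idealD A' B').
Proof. by move=> AA' BB' _ [a [b [Aa Bb ->]]]; exists a, b; split; auto. Qed.

Lemma idealD_subl A B : is_ideal B -> subI A (idealD A B).
Proof. by move=> idB x Ax; exists x, 0; split; rewrite ?addr0 //; apply: ideal0. Qed.

Lemma idealD_subr A B : is_ideal A -> subI B (idealD A B).
Proof. by move=> idA x Bx; exists 0, x; split; rewrite ?add0r //; apply: ideal0. Qed.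

Lemma idealD_least A B K : is_ideal K -> subI A K -> subI B K -> subI (idealD A B) K.
Proof. by move=> idK AK BK _ [a [b [Aa Bb ->]]]; apply: ideal_add; auto. Qed.

Lemma idealM_ideal A B : is_ideal A -> is_ideal (idealM A B).
Proof.
move=> idA; split.
- by exists 0%N, (fun _ => 0), (fun _ => 0); split=> [[]|]; rewrite ?big_ord0.
- move=> _ _ [n1 [a1 [b1 [ab1 ->]]]] [n2 [a2 [b2 [ab2 ->]]]].
  exists (n1 + n2)%N, (fun i => match split i with inl j => a1 j | inr j => a2 j end),
    (fun i => match split i with inl j => b1 j | inr j => b2 j end); split.
  + by move=> i; case: (split i).
  + rewrite big_split_ord; congr (_ + _); apply: eq_bigr => i _.
    * by rewrite (unsplitK (inl i : 'I_n1 + 'I_n2)).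
    * by rewrite (unsplitK (inr i : 'I_n1 + 'I_n2)).
- move=> r _ [n [a [b [ab ->]]]]; exists n, (fun i => r * a i), b; split.
  + by move=> i; have [Aa Bb] := ab i; split=> //; apply: ideal_mull.
  + by rewrite mulr_sumr; apply: eq_bigr => i _; rewrite mulrA.
Qed.

Lemma idealX_ideal A n : is_ideal A -> is_ideal (idealX A n).
Proof. by case: n => [|n] idA; [exact: ideal_full | exact: idealM_ideal]. Qed.

Lemma idealM_subl A B : is_ideal A -> subI (idealM A B) A.
Proof.
move=> idA _ [n [a [b [ab ->]]]]; apply: (ideal_sum idA) => i.
by apply: ideal_mulr; case: (ab i).
Qed.

Lemma idealM_sub A A' B B' : subI A A' -> subI B B' -> subI (idealM A B) (idealM A' B').
Proof.
move=> AA' BB' _ [n [a [b [ab ->]]]]; exists n, a, b; split=> // i.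
by have [Aa Bb] := ab i; split; auto.
Qed.

Lemma AR_prop_idealIX_sub m I ar N : is_ideal m -> AR_prop m I ar -> (ar < N)%N ->
  subI (idealI (idealX m N) I) (idealM m I).
Proof.
move=> idm AR lt_arN x mIx; have := (AR N (ltnW lt_arN) x).1 mIx.
apply: idealM_sub => [y|y [] //]; rewrite -subnSK //=.
exact: idealM_subl.
Qed.

Definition lincomb A s (t : nat) : R -> Prop :=
  fun x => exists c : nat -> R, (forall i, A (c i)) /\ x = \sum_(i < t) c i * s`_i.

Lemma lincomb_ideal A s t : is_ideal A -> is_ideal (lincomb A s t).
Proof.
move=> idA; split.
- exists (fun _ => 0); split=> [i|]; first exact: ideal0.
  by rewrite big1 // => i _; rewrite mul0r.
- move=> _ _ [c [Ac ->]] [d [Ad ->]]; exists (fun i => c i + d i); split.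
  + by move=> i; apply: ideal_add.
  + by rewrite -big_split; apply: eq_bigr => i _; rewrite mulrDl.
- move=> r _ [c [Ac ->]]; exists (fun i => r * c i); split.
  + by move=> i; apply: ideal_mull.
  + by rewrite mulr_sumr; apply: eq_bigr => i _; rewrite mulrA.
Qed.

Lemma lincomb0 A s x : lincomb A s 0 x -> x = 0.
Proof. by case=> c [_ ->]; rewrite big_ord0. Qed.

Lemma lincombS A s t x : lincomb A s t.+1 x ->
  exists y c, [/\ lincomb A s t y, A c & x = y + c * s`_t].
Proof.
case=> c [Ac ->]; rewrite big_ord_recr /=.
by exists (\sum_(i < t) c i * s`_i), (c t); split=> //; exists c.
Qed.

Lemma ideal_gen_lincomb s : subI (ideal_gen s) (lincomb (fun _ => True) s (size s)).
Proof.
move=> _ [c ->]; exists (fun n => if insub n is Some j then c j else 0); split=> //.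
by apply: eq_bigr => i _; rewrite valK.
Qed.

Lemma idealM_lincomb A K s t : is_ideal A -> is_ideal K ->
  subI (idealM A (idealD K (lincomb (fun _ => True) s t))) (idealD K (lincomb A s t)).
Proof.
move=> idA idK _ [n [a [b [ab ->]]]].
apply: (ideal_sum (idealD_ideal idK (lincomb_ideal s t idA))) => k.
have [Aa [y [_ [Ky [c [_ ->]] ->]]]] := ab k.
exists (a k * y), (\sum_(i < t) (a k * c i) * s`_i); split.
- exact: ideal_mull.
- by exists (fun i => a k * c i); split=> // i; apply: ideal_mulr.
- by rewrite mulrDr mulr_sumr; congr (_ + _); apply: eq_bigr => i _; rewrite mulrA.
Qed.

Lemma ideal_gen_lift I K g f : is_ideal I -> is_ideal K -> subI (ideal_gen f) I ->
  size f = size g -> (forall i, (i < size g)%N -> K (g`_i - f`_i)) ->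
  subI I (idealD (ideal_gen g) K) -> subI I (idealD (ideal_gen f) (idealI K I)).
Proof.
move=> idI idK fI size_fg gfK IgK x Ix.
have [_ [e [[c ->] Ke xE]]] := IgK x Ix.
pose y := \sum_(i < size g) c i * f`_i.
have fy : ideal_gen f y.
  apply: (ideal_sum (ideal_gen_ideal f)) => i; apply: (ideal_mull (ideal_gen_ideal f)).
  by apply/ideal_gen_mem/mem_nth; rewrite size_fg.
exists y, (x - y); split=> //; last by rewrite addrC subrK.
split; last exact: (ideal_sub idI Ix (fI y fy)).
have -> : x - y = e + \sum_(i < size g) c i * (g`_i - f`_i).
  by rewrite xE /y (eq_bigr _ (fun i _ => mulrBr _ _ _)) sumrB; ring.
apply: (ideal_add idK Ke); apply: (ideal_sum idK) => i.
exact: (ideal_mull idK (c i) (gfK i (ltn_ord i))).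
Qed.

Lemma mu_spec I : (exists n, ngen I n) ->
  ngen I (mu I) /\ forall k, ngen I k -> (mu I <= k)%N.
Proof.
move=> [n gen_n].
apply: (epsilon_spec (inhabits 0%N) (fun n => ngen I n /\ forall k, ngen I k -> (n <= k)%N)).
elim/ltn_ind: n gen_n => n IH gen_n.
have [[k [lt_kn gen_k]]|no_smaller] := classic (exists k, (k < n)%N /\ ngen I k).
- exact: IH gen_k.
- exists n; split=> // k gen_k; rewrite leqNgt; apply/negP => lt_kn.
  by apply: no_smaller; exists k.
Qed.

Section Noetherian.
Hypothesis noeth : noetherian R.

Lemma noetherian_chain (C : nat -> R -> Prop) :
  (forall n, is_ideal (C n)) -> (forall n, subI (C n) (C n.+1)) ->
  exists k, subI (C k.+1) (C k).
Proof.
move=> idC incC.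
have monoC n n' : (n <= n')%N -> subI (C n) (C n').
  by move=> /subnK <-; elim: (n' - n)%N => [|k IH] x Cx //; apply/incC/IH.
pose U x := exists n, C n x.
have idU : is_ideal U.
  split; first by exists 0%N; apply: ideal0.
  - move=> x y [n Cx] [n' Cy]; exists (maxn n n'); apply: (ideal_add (idC _)).
    + exact: monoC (leq_maxl n n') _ Cx.
    + exact: monoC (leq_maxr n n') _ Cy.
  - by move=> r x [n Cx]; exists n; apply: ideal_mull.
have [_ [s [_ Us]]] := noeth idU.
have [k sC] : exists k, forall x, x \in s -> C k x.
  have : forall x, x \in s -> U x by move=> x /ideal_gen_mem /Us.
  elim: s {Us} => [|a s IH] sU; first by exists 0%N.
  have [n Ca] := sU a (mem_head a s).
  have [k sC] : exists k, forall x, x \in s -> C k x.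
    by apply: IH => x xs; apply: sU; rewrite in_cons xs orbT.
  exists (maxn n k) => x; rewrite in_cons => /predU1P [->|xs].
  - exact: monoC (leq_maxl n k) _ Ca.
  - exact: monoC (leq_maxr n k) _ (sC x xs).
by exists k => x Cx; apply: (ideal_gen_sub (idC k) sC); apply/Us; exists k.+1.
Qed.

Lemma noetherian_maximal (F : (R -> Prop) -> Prop) Q0 :
  (forall Q, F Q -> is_ideal Q) -> F Q0 ->
  exists2 M, F M & forall J, F J -> subI M J -> subI J M.
Proof.
move=> idF FQ0; apply: NNPP => no_max.
pose bigger (Q J : R -> Prop) := [/\ F J, subI Q J & ~ subI J Q].
have bigger_ex Q : F Q -> exists J, bigger Q J.
  move=> FQ; apply: NNPP => no_bigger; apply: no_max; exists Q => // J FJ QJ.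
  by apply: NNPP => JQ; apply: no_bigger; exists J.
pose next Q := epsilon (inhabits Q) (bigger Q).
have nextP Q : F Q -> bigger Q (next Q).
  by move=> FQ; apply: epsilon_spec; apply: bigger_ex.
pose C n := iter n next Q0.
have FC n : F (C n) by elim: n => //= n /nextP [].
have incC n : subI (C n) (C n.+1) by case: (nextP _ (FC n)).
have [k stuck] := noetherian_chain (fun n => idF _ (FC n)) incC.
by case: (nextP _ (FC k)) => _ _; apply.
Qed.

Lemma exists_maximal_ideal P : is_ideal P -> ~ P 1 ->
  exists M, maximal_ideal M /\ subI P M.
Proof.
move=> idP P1; pose F Q := [/\ is_ideal Q, subI P Q & ~ Q 1].
have idF Q : F Q -> is_ideal Q by case.
have FP : F P by split.
have [M [idM PM M1] Mmax] := noetherian_maximal idF FP.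
exists M; split=> //; split=> // J idJ MJ.
have [J1|J1] := classic (J 1); [by right | left].
by move=> x; split=> [|/MJ //]; apply: Mmax => //; split=> // y /PM /MJ.
Qed.

Section Local.
Variable m : R -> Prop.
Hypothesis local : local_ring m.

Lemma local_unit_one_sub a : m a -> exists u, u * (1 - a) = 1.
Proof.
have [[idm m1 _] m_unique] := local.
move=> ma; apply: NNPP => no_inv.
have gen1 : ~ ideal_gen [:: 1 - a] 1.
  case=> c; rewrite big_ord1 => c1; apply: no_inv; exists (c ord0).
  exact/esym.
have [M [maxM sub]] := exists_maximal_ideal (ideal_gen_ideal [:: 1 - a]) gen1.
have m1a : m (1 - a) by apply/(m_unique M maxM)/sub/ideal_gen_mem/mem_head.
by apply: m1; rewrite -(subrK a 1); apply: ideal_add.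
Qed.

Lemma local_cancel K a x : is_ideal K -> m a -> K ((1 - a) * x) -> K x.
Proof.
move=> idK /local_unit_one_sub [u u1a] Kx.
by rewrite -[x]mul1r -u1a -mulrA; apply: ideal_mull.
Qed.

Section Nakayama.
Variables (I Ip : R -> Prop) (h : seq R).
Hypotheses (idIp : is_ideal Ip) (Ih : eqI I (ideal_gen h))
  (I_sub : subI I (idealD Ip (idealM m I))).
Local Notation L := (lincomb (fun _ => True) h).

(* Drop the generator h_t: h_t = y + w + c h_t with y in Ip, w in L t and c in m,
   and 1 - c is a unit. *)
Lemma nakayama_step t : (t < size h)%N ->
  subI I (idealD Ip (L t.+1)) -> subI I (idealD Ip (L t)).
Proof.
move=> lt_th I_sub1.
have idm : is_ideal m by case: local => [[]].
have idIpL := idealD_ideal idIp (lincomb_ideal h t ideal_full).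
have idIpM := idealD_ideal idIp (lincomb_ideal h t.+1 idm).
have mI_sub : subI (idealM m I) (idealD Ip (lincomb m h t.+1)).
  by move=> x /(idealM_sub (fun _ w => w) I_sub1) /(idealM_lincomb idm idIp).
have ht : idealD Ip (lincomb m h t.+1) h`_t.
  have Iht : I h`_t by apply/Ih/ideal_gen_mem/mem_nth.
  apply: (idealD_least idIpM (idealD_subl (lincomb_ideal h t.+1 idm)) (fun _ w => w)).
  exact: (idealD_sub (fun _ w => w) mI_sub (I_sub Iht)).
have [y [_ [Ipy /lincombS [w [c [mw mc ->]]] htE]]] := ht.
have Lht : idealD Ip (L t) h`_t.
  apply: (local_cancel idIpL mc); exists y, w; split=> //.
  - by case: mw => d [_ ->]; exists d.
  - by rewrite mulrBl mul1r {1}htE; ring.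
have L_sub : subI (L t.+1) (idealD Ip (L t)).
  move=> _ /lincombS [w' [d [Lw' _ ->]]].
  exact: (ideal_add idIpL (idealD_subr idIp Lw') (ideal_mull idIpL d Lht)).
move=> x /I_sub1; apply: (idealD_least idIpL _ L_sub).
exact: idealD_subl (lincomb_ideal h t ideal_full).
Qed.

Theorem nakayama : subI I Ip.
Proof.
have I_down k : (k <= size h)%N -> subI I (idealD Ip (L (size h - k))).
  elim: k => [_|k IH lt_kh].
    by rewrite subn0 => x /Ih /ideal_gen_lincomb; apply: idealD_subr.
  apply: nakayama_step; first by rewrite ltn_subrL /= (leq_trans (ltn0Sn k) lt_kh).
  by rewrite subnSK //; apply: IH; apply: ltnW.
move=> x /(I_down _ (leqnn _)); rewrite subnn => -[y [z [Ipy /lincomb0 -> ->]]].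
by rewrite addr0.
Qed.

End Nakayama.
End Local.
End Noetherian.

End Ideals.

Theorem proposition3p4 (R : comNzRingType) (m I J : R -> Prop) (ar N : nat) :
  noetherian R -> local_ring m -> is_ideal I -> is_ideal J ->
  is_AR m I ar -> (ar < N)%N ->
  eqI (idealD I (idealX m N)) (idealD J (idealX m N)) ->
  (mu I <= mu J)%N.
Proof.
move=> noeth local idI idJ [AR _] lt_arN IJ.
have idm : is_ideal m by case: local => [[]].
have idmN := idealX_ideal N idm.
have [[g [size_g Jg]] _] := mu_spec (noeth J idJ).
have [f [size_f lift]] : exists f : seq R, size f = size g /\
    forall i, (i < size g)%N -> I f`_i /\ idealX m N (g`_i - f`_i).
  apply: (@seq_lift _ _ 0 0 (fun x y => I y /\ idealX m N (x - y))) => i lt_i.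
  have /IJ [a [b [Ia mNb ->]]] : idealD J (idealX m N) g`_i.
    exact/(idealD_subl idmN)/Jg/ideal_gen_mem/mem_nth.
  by exists a; rewrite addrC addKr.
have I_gmN : subI I (idealD (ideal_gen g) (idealX m N)).
  by move=> x /(idealD_subl idmN) /IJ; apply: idealD_sub => // y /Jg.
have fI : subI (ideal_gen f) I.
  apply: (ideal_gen_sub idI) => _ /(nthP 0) [i lt_i <-].
  by rewrite size_f in lt_i; case: (lift i lt_i).
have I_fmI : subI I (idealD (ideal_gen f) (idealM m I)).
  move=> x /(ideal_gen_lift idI idmN fI size_f (fun i lt_i => (lift i lt_i).2) I_gmN).
  exact: (idealD_sub (fun _ w => w) (AR_prop_idealIX_sub idm AR lt_arN)).
have If : eqI I (ideal_gen f).
  have [n [h [_ Ih]]] := noeth I idI.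
  by move=> x; split; [exact: (nakayama noeth local (ideal_gen_ideal f) Ih I_fmI) | apply: fI].
have gen_f : ngen I (size f) by exists f.
by rewrite -size_g -size_f; apply: (mu_spec (ex_intro _ _ gen_f)).2.
Qed.
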